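(* Let $\mathcal X$ be a set, let $\kappa:\mathcal X\to\mathbb N\cup\{\infty\}$ and $C_\theta:\mathcal X\to\mathbb R_{\ge 0}$ be maps, and let $\oplus:\mathcal X\times\mathcal X\to\mathcal X$ be a binary operation. For $x_1,\dots,x_m\in\mathcal X$ with $m\ge 3$, write $x_1\oplus\cdots\oplus x_m$ for the right-associated composition $x_1\oplus(x_2\oplus(\cdots\oplus x_m))$. Suppose we are given a notion of independence for pairs $x,y\in\mathcal X$ and of joint independence for finite families in $\mathcal X$. Define \[ \mathcal X_{\mathrm{fin}}:=\{x\in\mathcal X:\kappa(x)<\infty\},\qquad K:=\kappa(\mathcal X_{\mathrm{fin}})\subseteq\mathbb N. \] Assume the following, on $\mathcal X_{\mathrm{fin}}$: (A1) (Monotonicity) For all $x,y\in\mathcal X_{\mathrm{fin}}$, if $\kappa(x)\le\kappa(y)$ then $C_\theta(x)\le C_\theta(y)$. (A2) (Additivity under composition of independent questions) For all independent $x,y\in\mathcal X_{\mathrm{fin}}$, \[ \kappa(x\oplus y)=\kappa(x)+\kappa(y),\qquad C_\theta(x\oplus y)=C_\theta(x)+C_\theta(y). \] (A3) For every $u\in K$ and every $m\in\mathbb N$ ($m\ge 1$), there exist $x_1,\dots,x_m\in\mathcal X_{\mathrm{fin}}$ with $\kappa(x_i)=u$ for all $i$ and $\{x_1,\dots,x_m\}$ jointly independent; consequently $x_1\oplus\cdots\oplus x_m$ is valid and \[ \kappa(x_1\oplus\cdots\oplus x_m)=mu\in K,\qquad C_\theta(x_1\oplus\cdots\oplus x_m)=\sum_{i=1}^m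 C_\theta(x_i). \] Then there exists a constant $\alpha_\theta\ge 0$ such that $C_\theta(x)=\alpha_\theta\,\kappa(x)$ for all $x\in\mathcal X_{\mathrm{fin}}$.
   Context: Interpretation (not needed for the statement): $\mathcal X$ is a space of questions, $\kappa(x)$ is the complexity of question $x$ (minimal number of primitive solution steps), $C_\theta(x)$ is the expected number of reasoning tokens a model $\theta$ generates on $x$, and $x\oplus y$ is the composite question formed by concatenating $x$ and $y$ with a connector prompt. Independence of $x,y$ is the abstract relation under which (A2) applies; joint independence of a finite family is the abstract property used in (A3), whose stated consequence (validity of the composition, additivity of $\kappa$ and of $C_\theta$ over the right-associated composition) is part of the assumption. *)

From HB Require Import structures.
From mathcomp Require Import all_boot all_order all_algebra.
From mathcomp Require Import reals.
Set Implicit Arguments. Unset Strict Implicit. Unset Printing Implicit Defensive.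
Import Order.TTheory GRing.Theory Num.Theory.

(* kappa : X -> option nat, where [None] encodes the value infinity. *)

Fixpoint rcomp (X : Type) (oplus : X -> X -> X) (x1 : X) (s : seq X) : X :=
  match s with
  | [::] => x1
  | y :: s' => oplus x1 (rcomp oplus y s')
  end.

From mathcomp Require Import all_boot all_order all_algebra.
From mathcomp Require Import reals.
From mathcomp Require boolp.
Set Implicit Arguments. Unset Strict Implicit.
Import Order.TTheory GRing.Theory Num.Theory.
Local Open Scope ring_scope.

(* Monotonicity makes C constant on each level set of kappa, and composing
   m independent copies of a level-u question multiplies C by m.  Composing
   v copies of a level-u question and u copies of a level-v question lands on
   the same level uv, hence C(x) v = C(y) u for any two finite questions:
   C / kappa is constant on the questions of positive complexity, and C
   vanishes at complexity 0 (two copies of such a question still have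
   complexity 0, so C = 2C).  Only (A1) and (A3) are needed. *)

Section ProportionalCost.

Variables (R : numFieldType) (X : Type) (kappa : X -> option nat) (C : X -> R).

Hypothesis C_level :
  forall {x y u}, kappa x = Some u -> kappa y = Some u -> C x = C y.

Lemma sum_C_level (f : nat -> X) x u m :
  (forall i, (i < m)%N -> kappa (f i) = Some u) -> kappa x = Some u ->
  \sum_(i < m) C (f i) = m%:R * C x.
Proof.
move=> hf hx; rewrite (eq_bigr (fun=> C x)) ?sumr_const ?card_ord ?mulr_natl //.
by move=> i _; apply: C_level (hf i _) hx.
Qed.

Hypothesis C_scale : forall {x u m}, kappa x = Some u -> (0 < m)%N ->
  exists2 y, kappa y = Some (m * u)%N & C y = m%:R * C x.

Lemma C_kappa0 x : kappa x = Some 0%N -> C x = 0.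
Proof.
move=> hx; have [y hy] := C_scale hx (isT : (0 < 2)%N); rewrite muln0 in hy.
rewrite (C_level hy hx) mulr_natl mulr2n => /eqP.
by rewrite -[X in X == _]addr0 (inj_eq (addrI _)) eq_sym => /eqP.
Qed.

Lemma C_cross x y u v : kappa x = Some u -> kappa y = Some v ->
  C x * v%:R = C y * u%:R.
Proof.
move=> hx hy; case: v hy => [|v] hy; first by rewrite (C_kappa0 hy) mulr0 mul0r.
case: u hx => [|u] hx; first by rewrite (C_kappa0 hx) mulr0 mul0r.
rewrite mulrC [RHS]mulrC.
have [x' hx' <-] := C_scale hx (ltn0Sn v).
have [y' hy' <-] := C_scale hy (ltn0Sn u).
by rewrite mulnC in hy'; apply: C_level hx' hy'.
Qed.

Lemma C_proportional x0 u0 : kappa x0 = Some u0 -> (0 < u0)%N ->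
  forall x u, kappa x = Some u -> C x = C x0 / u0%:R * u%:R.
Proof.
move=> hx0 hu0 x u hx; have u0_neq0 : u0%:R != 0 :> R by rewrite pnatr_eq0 -lt0n.
by rewrite mulrAC (C_cross hx0 hx) mulfK.
Qed.

End ProportionalCost.

Theorem proposition1 (R : realType) (X : Type)
  (kappa : X -> option nat) (C : X -> R) (oplus : X -> X -> X)
  (indep : X -> X -> Prop) (jindep : seq X -> Prop) (valid : X -> Prop)
  (C_ge0 : forall x, 0 <= C x)
  (A1 : forall x y u v, kappa x = Some u -> kappa y = Some v ->
          (u <= v)%N -> C x <= C y)
  (A2 : forall x y u v, kappa x = Some u -> kappa y = Some v -> indep x y ->
          kappa (oplus x y) = Some (u + v)%N /\ C (oplus x y) = C x + C y)
  (A3 : forall (x0 : X) (u m : nat), kappa x0 = Some u -> (0 < m)%N ->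
          exists (x1 : X) (s : seq X),
            size s = m.-1 /\
            (forall i, (i < m)%N -> kappa (nth x1 (x1 :: s) i) = Some u) /\
            jindep (x1 :: s) /\
            valid (rcomp oplus x1 s) /\
            kappa (rcomp oplus x1 s) = Some (m * u)%N /\
            C (rcomp oplus x1 s) = \sum_(i < m) C (nth x1 (x1 :: s) i)) :
  exists alpha : R, 0 <= alpha /\
    forall x u, kappa x = Some u -> C x = alpha * u%:R.
Proof.
have C_level x y u : kappa x = Some u -> kappa y = Some u -> C x = C y.
  by move=> hx hy; apply/le_anti; rewrite (A1 _ _ _ _ hx hy) ?(A1 _ _ _ _ hy hx).
have C_scale x u m : kappa x = Some u -> (0 < m)%N ->
    exists2 y, kappa y = Some (m * u)%N & C y = m%:R * C x.
  move=> hx hm; have [x1 [s [_ [hs [_ [_ [hk hC]]]]]]] := A3 x u m hx hm.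
  by exists (rcomp oplus x1 s); rewrite // hC (sum_C_level C_level hs hx).
have [[x0 [u0 [hx0 hu0]]] | no_pos] :=
  boolp.EM (exists x0 u0, kappa x0 = Some u0 /\ (0 < u0)%N).
  exists (C x0 / u0%:R); split; first by rewrite divr_ge0.
  by move=> x u; apply: (C_proportional C_level C_scale hx0 hu0).
exists 0; split => // x [|u] hx; first by rewrite mul0r (C_kappa0 C_level C_scale hx).
by case: no_pos; exists x, u.+1.
Qed.
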